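(* For a finite set $\Gamma=\{\gamma_1,\dots,\gamma_n\}$ of tape symbols, the tape theory over $\Gamma$ is not finitely axiomatizable: there is no finite set of equations in the tape signature whose deductive closure under equational logic equals the tape theory.
   Context: For $i\in\mathbb Z$, $k\ge 0$ and $\sigma,\sigma':\mathbb Z\to\Gamma$ write $\sigma=_{i\pm k}\sigma'$ if $\sigma(j)=\sigma'(j)$ for all $j$ with $|i-j|\le k$, and $\sigma=^{i\pm k}\sigma'$ if $\sigma(j)=\sigma'(j)$ for all $j$ with $|i-j|>k$; write $\sigma_{+j}=\sigma\circ(\lambda i.\,i+j)$. The tape monad over $\Gamma$ assigns to a set $X$ the set $TX$ of maps $\langle r,z,t\rangle:\mathbb Z\times\Gamma^{\mathbb Z}\to X\times\mathbb Z\times\Gamma^{\mathbb Z}$ for which there is $k\ge0$ such that for all $i,j\in\mathbb Z$ and all $\sigma,\sigma'$ with $\sigma=_{i\pm k}\sigma'$: $t(i,\sigma)=_{i\pm k}t(i,\sigma')$, $r(i,\sigma)=r(i,\sigma')$, $|z(i,\sigma)-i|\le k$, $t(i,\sigma)=^{i\pm k}\sigma$, $z(i,\sigma)=z(i,\sigma')$, $t(i,\sigma_{+j})=t(i+j,\sigma)_{+j}$, $r(i,\sigma_{+j})=r(i+j,\sigma)$, $z(i,\sigma_{+j})=z(i+j,\sigma)-j$. The tape signature consists of an $n$-ary operation $read$, unary operations $write_i$ ($1\le i\le n$), and unary operations $lmove$, $rmove$, interpreted on each $TX$ by $read(p_1,\dots,p_n)(z,\sigma)=p_{\sigma(z)}(z,\sigma)$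 (where $p_{\gamma_i}$ means $p_i$), $write_i(p)(z,\sigma)=p(z,\sigma[z\mapsto\gamma_i])$, $lmove(p)(z,\sigma)=p(z-1,\sigma)$, $rmove(p)(z,\sigma)=p(z+1,\sigma)$, where $\sigma[z\mapsto\gamma]$ agrees with $\sigma$ except that it maps $z$ to $\gamma$. The tape theory over $\Gamma$ is the set of all equations $p=q$ between terms of the tape signature that are valid under this interpretation in $TX$ for every set $X$. *)

From Stdlib Require Import ZArith List.
From mathcomp Require Import all_boot.

Set Implicit Arguments.
Unset Strict Implicit.
Unset Printing Implicit Defensive.

(* The tape alphabet Gamma = {gamma_1, ..., gamma_n} is represented by 'I_n,
   gamma_i being the ordinal i-1. Tapes are maps Z -> 'I_n. *)
Definition tape (n : nat) := Z -> 'I_n.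

Definition agree_near (n : nat) (i k : Z) (s s' : tape n) : Prop :=
  forall j : Z, (Z.abs (i - j) <= k)%Z -> s j = s' j.

Definition agree_far (n : nat) (i k : Z) (s s' : tape n) : Prop :=
  forall j : Z, (Z.abs (i - j) > k)%Z -> s j = s' j.

Definition shift (n : nat) (s : tape n) (j : Z) : tape n := fun m => s (m + j)%Z.

Definition upd (n : nat) (s : tape n) (z : Z) (g : 'I_n) : tape n :=
  fun m => if Z.eqb m z then g else s m.

(* The ambient space of maps Z x Gamma^Z -> X x Z x Gamma^Z, written curried as
   p z sigma = (r(z,sigma), z(z,sigma), t(z,sigma)). *)
Definition M (n : nat) (X : Type) := Z -> tape n -> X * Z * tape n.

Definition rr n X (p : M n X) i s : X := fst (fst (p i s)).
Definition zz n X (p : M n X) i s : Z := snd (fst (p i s)).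
Definition tt n X (p : M n X) i s : tape n := snd (p i s).

Definition inT (n : nat) (X : Type) (p : M n X) : Prop :=
  exists k : Z, (0 <= k)%Z /\
    forall (i j : Z) (s s' : tape n), agree_near i k s s' ->
      agree_near i k (tt p i s) (tt p i s') /\
      rr p i s = rr p i s' /\
      (Z.abs (zz p i s - i) <= k)%Z /\
      agree_far i k (tt p i s) s /\
      zz p i s = zz p i s' /\
      tt p i (shift s j) = shift (tt p (i + j)%Z s) j /\
      rr p i (shift s j) = rr p (i + j)%Z s /\
      zz p i (shift s j) = (zz p (i + j)%Z s - j)%Z.

Inductive term (n : nat) : Type :=
| Var : nat -> term n
| Read : ('I_n -> term n) -> term n
| Write : 'I_n -> term n -> term n
| Lmove : term n -> term n
| Rmove : term n -> term n.

Arguments Var {n} _.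

Fixpoint interp (n : nat) (X : Type) (v : nat -> M n X) (t : term n) : M n X :=
  match t with
  | Var x => v x
  | Read ps => fun z s => interp v (ps (s z)) z s
  | Write g p => fun z s => interp v p z (upd s z g)
  | Lmove p => fun z s => interp v p (z - 1)%Z s
  | Rmove p => fun z s => interp v p (z + 1)%Z s
  end.

Definition valid (n : nat) (p q : term n) : Prop :=
  forall (X : Type) (v : nat -> M n X), (forall x, inT (v x)) ->
    forall (z : Z) (s : tape n), interp v p z s = interp v q z s.

Fixpoint subst (n : nat) (f : nat -> term n) (t : term n) : term n :=
  match t with
  | Var x => f x
  | Read ps => Read (fun i => subst f (ps i))
  | Write g p => Write g (subst f p)
  | Lmove p => Lmove (subst f p)
  | Rmove p => Rmove (subst f p)
  end.

Inductive derivable (n : nat) (E : list (term n * term n)) : term n -> term n -> Prop :=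
| d_ax : forall l r (f : nat -> term n), In (l, r) E -> derivable E (subst f l) (subst f r)
| d_refl : forall p, derivable E p p
| d_sym : forall p q, derivable E p q -> derivable E q p
| d_trans : forall p q u, derivable E p q -> derivable E q u -> derivable E p u
| d_read : forall ps qs, (forall i, derivable E (ps i) (qs i)) -> derivable E (Read ps) (Read qs)
| d_write : forall g p q, derivable E p q -> derivable E (Write g p) (Write g q)
| d_lmove : forall p q, derivable E p q -> derivable E (Lmove p) (Lmove q)
| d_rmove : forall p q, derivable E p q -> derivable E (Rmove p) (Rmove q).

From Stdlib Require Import ZArith List Lia FunctionalExtensionality.
From mathcomp Require Import all_boot zify.

Set Implicit Arguments.
Unset Strict Implicit.
Unset Printing Implicit Defensive.

(* Every term u has a finite reach: the head never travels more
   than [reach u] cells away from its start.  Given a finite set E of valid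
   equations, let D bound the reach of all of them and let m = 2D + 2.
   In the m-periodic model the tape is Z/mZ-periodic and writing a cell writes
   its whole residue class; a term is run symbolically there, each variable x
   just reporting its exit (x, position, tape).  Inside a window of 2D + 1 < m
   cells the periodic tape looks like an ordinary one, so every valid
   equation of reach at most D holds in the periodic model (simulation
   lemma, instantiated with the free valuation [ret]).  The periodic model
   is closed under equational deduction, hence satisfies all consequences of
   E.  But the valid equation
     write_a rmove^m read(g => lmove^m x_g)
       = write_b rmove^m read(g => lmove^m write_a x_g)
   fails there, since the cell m steps to the right is the cell just
   written. *)

Section TapeTheory.
Variable n : nat.

Fixpoint reach (u : term n) : nat :=
  match u with
  | Var _ => 0
  | Read ps => \max_(i < n) reach (ps i)
  | Write _ p => reach p
  | Lmove p => (reach p).+1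
  | Rmove p => (reach p).+1
  end.

Definition reach_list (E : list (term n * term n)) : nat :=
  foldr (fun e d => maxn (maxn (reach e.1) (reach e.2)) d) 0%N E.

Lemma reach_list_bound E l r :
  In (l, r) E -> (reach l <= reach_list E)%N /\ (reach r <= reach_list E)%N.
Proof.
induction E as [|[l' r'] E IH]; simpl; [tauto|].
intros [Heq|Hin]; [injection Heq as -> ->; lia|].
have := IH Hin; lia.
Qed.

Definition periodic (m : Z) (t : tape n) : Prop :=
  forall j j', ((j - j') mod m)%Z = 0%Z -> t j = t j'.

Definition wrap_upd (m : Z) (t : tape n) (z : Z) (g : 'I_n) : tape n :=
  fun j => if Z.eqb ((j - z) mod m)%Z 0%Z then g else t j.

Fixpoint peval (m : Z) (u : term n) (z : Z) (t : tape n) : nat * Z * tape n :=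
  match u with
  | Var x => (x, z, t)
  | Read ps => peval m (ps (t z)) z t
  | Write g p => peval m p z (wrap_upd m t z g)
  | Lmove p => peval m p (z - 1)%Z t
  | Rmove p => peval m p (z + 1)%Z t
  end.

Lemma wrap_upd_periodic m t z g :
  (0 < m)%Z -> periodic m t -> periodic m (wrap_upd m t z g).
Proof.
intros hm Ht j j' E; unfold wrap_upd.
assert (Hres : ((j - z) mod m)%Z = ((j' - z) mod m)%Z).
{ have Q := Z.div_mod (j - j') m ltac:(lia). rewrite E Z.add_0_r in Q.
  replace (j - z)%Z with ((j' - z) + ((j - j') / m) * m)%Z by lia.
  now rewrite Z.mod_add; [|lia]. }
rewrite Hres; destruct (Z.eqb _ 0); auto.
Qed.

Lemma peval_subst m f u z t :
  peval m (subst f u) z t =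
  let '(x, z', t') := peval m u z t in peval m (f x) z' t'.
Proof.
revert z t; induction u as [x|ps IH|g p IH|p IH|p IH]; simpl; intros z t; auto.
Qed.

Lemma subst_var (u : term n) : subst Var u = u.
Proof.
induction u as [x|ps IH|g p IH|p IH|p IH]; simpl; f_equal; auto.
apply functional_extensionality; exact IH.
Qed.

Lemma derivable_periodic_sound m (E : list (term n * term n)) :
  (0 < m)%Z ->
  (forall l r, In (l, r) E -> forall z t, periodic m t -> peval m l z t = peval m r z t) ->
  forall p q, derivable E p q -> forall z t, periodic m t -> peval m p z t = peval m q z t.
Proof.
intros hm HE p q Hd; induction Hd as [l r f Hin| p | p q Hpq IH | p q u H1 IH1 H2 IH2
     | ps qs Hps IH | g p q Hpq IH | p q Hpq IH | p q Hpq IH]; intros z t Ht; simpl.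
- rewrite !peval_subst (HE _ _ Hin z t Ht); reflexivity.
- reflexivity.
- symmetry; auto.
- rewrite IH1 //; auto.
- apply IH; auto.
- apply IH; apply wrap_upd_periodic; auto.
- apply IH; auto.
- apply IH; auto.
Qed.

Definition ret (x : nat) : M n nat := fun z s => (x, z, s).

Lemma ret_inT x : inT (ret x).
Proof.
exists 0%Z; split; [lia|]; intros i j s s' H; unfold tt, rr, zz, ret; simpl.
repeat split; auto; lia.
Qed.

(* [window m b D j] is the representative of j mod m in the window
   [b - D, b - D + m); the window contains [b - D, b + D] when 2D < m. *)
Definition window (m b D j : Z) : Z := (b - D + (j - b + D) mod m)%Z.

Lemma window_id m b D z :
  (0 <= D)%Z -> (2 * D < m)%Z -> (Z.abs (z - b) <= D)%Z -> window m b D z = z.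
Proof. intros h1 h2 h3; unfold window; rewrite Z.mod_small; lia. Qed.

Lemma window_cong m b D j : (0 < m)%Z -> ((j - window m b D j) mod m)%Z = 0%Z.
Proof.
intros h; unfold window. have Q := Z.div_mod (j - b + D) m ltac:(lia).
replace (j - (b - D + (j - b + D) mod m))%Z with (0 + ((j - b + D) / m) * m)%Z by lia.
now rewrite Z.mod_add; [|lia].
Qed.

Lemma window_hit m b D z j :
  (0 <= D)%Z -> (2 * D < m)%Z -> (Z.abs (z - b) <= D)%Z ->
  Z.eqb ((j - z) mod m)%Z 0%Z = Z.eqb (window m b D j) z.
Proof.
intros h1 h2 h3; unfold window.
destruct (Z.eqb_spec ((j - z) mod m) 0) as [E|E];
destruct (Z.eqb_spec (b - D + (j - b + D) mod m) z) as [F|F]; auto; exfalso.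
- apply F. have Q := Z.div_mod (j - z) m ltac:(lia). rewrite E Z.add_0_r in Q.
  replace (j - b + D)%Z with ((z - b + D) + ((j - z) / m) * m)%Z by lia.
  rewrite Z.mod_add; [|lia]. rewrite Z.mod_small; lia.
- apply E. have Q := Z.div_mod (j - b + D) m ltac:(lia).
  replace (j - z)%Z with (0 + ((j - b + D) / m) * m)%Z by lia.
  now rewrite Z.mod_add; [|lia].
Qed.

Lemma peval_simulates m b D (hD : (0 <= D)%Z) (hm : (2 * D < m)%Z) u z s tm :
  (Z.abs (z - b) + Z.of_nat (reach u) <= D)%Z ->
  (forall j, tm j = s (window m b D j)) ->
  peval m u z tm = (fst (fst (interp ret u z s)), snd (fst (interp ret u z s)),
                    fun j => snd (interp ret u z s) (window m b D j)).
Proof.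
revert z s tm; induction u as [x|ps IH|g p IH|p IH|p IH]; simpl; intros z s tm Hz Ht.
- unfold ret; simpl. f_equal. apply functional_extensionality; exact Ht.
- rewrite Ht window_id; try lia. apply IH; auto.
  have/leP Hi := @leq_bigmax _ (fun i => reach (ps i)) (s z).
  set R := \max_(i < n) _ in Hz Hi; lia.
- apply IH; auto. intro j. unfold wrap_upd, upd.
  rewrite (@window_hit m b D z j hD hm); [|lia]. destruct (Z.eqb _ z); auto.
- apply IH; auto; lia.
- apply IH; auto; lia.
Qed.

Lemma valid_periodic m D l r :
  (0 <= D)%Z -> (2 * D < m)%Z ->
  (Z.of_nat (reach l) <= D)%Z -> (Z.of_nat (reach r) <= D)%Z -> valid l r ->
  forall z t, periodic m t -> peval m l z t = peval m r z t.
Proof.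
intros hD hm hl hr Hv z t Ht.
have Hwin : forall j, t j = t (window m z D j).
{ intro j; apply Ht; apply window_cong; lia. }
rewrite (peval_simulates hD hm (b:=z) (z:=z) _ Hwin); [|rewrite Z.sub_diag; simpl; lia].
rewrite (peval_simulates hD hm (b:=z) (z:=z) _ Hwin); [|rewrite Z.sub_diag; simpl; lia].
rewrite (Hv nat ret ret_inT z t); reflexivity.
Qed.

Lemma interp_iter_rmove X (v : nat -> M n X) k p z s :
  interp v (iter k (@Rmove n) p) z s = interp v p (z + Z.of_nat k)%Z s.
Proof.
revert z; induction k as [|k IH]; intros z; simpl; [|rewrite IH]; f_equal; lia.
Qed.

Lemma interp_iter_lmove X (v : nat -> M n X) k p z s :
  interp v (iter k (@Lmove n) p) z s = interp v p (z - Z.of_nat k)%Z s.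
Proof.
revert z; induction k as [|k IH]; intros z; simpl; [|rewrite IH]; f_equal; lia.
Qed.

Lemma peval_iter_rmove m k p z t :
  peval m (iter k (@Rmove n) p) z t = peval m p (z + Z.of_nat k)%Z t.
Proof.
revert z; induction k as [|k IH]; intros z; simpl; [|rewrite IH]; f_equal; lia.
Qed.

Lemma peval_iter_lmove m k p z t :
  peval m (iter k (@Lmove n) p) z t = peval m p (z - Z.of_nat k)%Z t.
Proof.
revert z; induction k as [|k IH]; intros z; simpl; [|rewrite IH]; f_equal; lia.
Qed.

Definition sep_lhs (a : 'I_n) (k : nat) : term n :=
  Write a (iter k (@Rmove n) (Read (fun g => iter k (@Lmove n) (Var (nat_of_ord g))))).

Definition sep_rhs (a b : 'I_n) (k : nat) : term n :=
  Write b (iter k (@Rmove n)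
    (Read (fun g => iter k (@Lmove n) (Write a (Var (nat_of_ord g)))))).

(* On a genuine tape the cell k > 0 steps away is untouched by the first
   write, so both sides coincide. *)
Lemma sep_valid a b k : (0 < k)%N -> valid (sep_lhs a k) (sep_rhs a b k).
Proof.
intros hk X v _ z s; unfold sep_lhs, sep_rhs; simpl (interp v (Write _ _)); cbv beta.
rewrite !interp_iter_rmove; simpl (interp v (Read _)); cbv beta.
rewrite !interp_iter_lmove; simpl.
have Hfar : forall g : 'I_n, upd s z g (z + Z.of_nat k)%Z = s (z + Z.of_nat k)%Z.
{ intro g; unfold upd. replace (Z.eqb (z + Z.of_nat k) z) with false; [reflexivity|].
  symmetry; apply Z.eqb_neq; lia. }
rewrite !Hfar. replace (z + Z.of_nat k - Z.of_nat k)%Z with z by lia.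
replace (upd (upd s z b) z a) with (upd s z a); [reflexivity|].
apply functional_extensionality; intro j; unfold upd; destruct (Z.eqb j z); auto.
Qed.

(* In the periodic model of period k the cell k steps away is the written
   cell itself, so each side exits through the variable it has just written. *)
Lemma peval_sep_lhs a k z t : (0 < k)%N ->
  fst (fst (peval (Z.of_nat k) (sep_lhs a k) z t)) = nat_of_ord a.
Proof.
intro hk; unfold sep_lhs; simpl (peval _ (Write _ _) _ _).
rewrite peval_iter_rmove; simpl (peval _ (Read _) _ _); rewrite peval_iter_lmove; simpl.
unfold wrap_upd. replace (z + Z.of_nat k - z)%Z with (Z.of_nat k) by lia.
rewrite Z.mod_same; [reflexivity|lia].
Qed.

Lemma peval_sep_rhs a b k z t : (0 < k)%N ->
  fst (fst (peval (Z.of_nat k) (sep_rhs a b k) z t)) = nat_of_ord b.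
Proof.
intro hk; unfold sep_rhs; simpl (peval _ (Write _ _) _ _).
rewrite peval_iter_rmove; simpl (peval _ (Read _) _ _); rewrite peval_iter_lmove; simpl.
unfold wrap_upd. replace (z + Z.of_nat k - z)%Z with (Z.of_nat k) by lia.
rewrite Z.mod_same; [reflexivity|lia].
Qed.

End TapeTheory.

Theorem mainTheorem2 (n : nat) (hn : (2 <= n)%N) :
  forall E : list (term n * term n),
    ~ (forall p q : term n, derivable E p q <-> valid p q).
Proof.
intros E Hax.
set D := reach_list E.
set k := (2 * D + 2)%N.
have hk : (0 < k)%N by rewrite /k; lia.
(* Every axiom is valid and of reach at most D, so holds in the k-periodic model. *)
have HE : forall l r, In (l, r) E ->
  forall z t, periodic (Z.of_nat k) t -> peval (Z.of_nat k) l z t = peval (Z.of_nat k) r z t.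
{ intros l r Hin. have [hl hr] := reach_list_bound Hin.
  apply (@valid_periodic n (Z.of_nat k) (Z.of_nat D)); try (rewrite /k; lia).
  apply Hax; rewrite -(subst_var l) -(subst_var r); exact: d_ax. }
(* Two distinct symbols give a valid equation that fails in that model. *)
have h0 : (0 < n)%N by lia.
have h1 : (1 < n)%N by lia.
set a := Ordinal h0; set b := Ordinal h1.
have Hder : derivable E (sep_lhs a k) (sep_rhs a b k) by apply Hax, sep_valid.
have Hconst : periodic (Z.of_nat k) (fun _ => a) by [].
have hkZ : (0 < Z.of_nat k)%Z by lia.
have Hsound := derivable_periodic_sound hkZ HE Hder 0%Z Hconst.
have := peval_sep_lhs a 0 (fun _ => a) hk.
by rewrite Hsound peval_sep_rhs.
Qed.
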